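(* Let $d\ge2$, $D\in\mathbb{C}[t]$ squarefree of degree $2d$, $(A,B)$ a solution of degree $n$ of $A^2-DB^2=1$, and $(\sigma_0,\sigma_\infty,\sigma_1,\tau_1,\dots,\tau_k)$ a monodromy tuple of $\phi_A=A^2$ labelled so that $\sigma_\infty=(2n,2n-1,\dots,1)$ and $2n$ is fixed by $\sigma_1$ and by every $\tau_i$. Let $m\mid n$ with $n/m\ge d$, let $F_h=\{j\in\{1,\dots,2n\}: j\equiv h \bmod 2m\}$ ($h=1,\dots,2m$) and $E_h=\{j: j\equiv h\bmod m\}=F_h\cup F_{m+h}$ ($h=1,\dots,m$). Suppose $G_A$ preserves the partition $\{F_1,\dots,F_{2m}\}$. Then $G_A$ also preserves $\{E_1,\dots,E_m\}$, and: $\sigma_\infty(F_1)=F_{2m}$, $\sigma_\infty(F_i)=F_{i-1}$ for $2\le i\le 2m$; $\sigma_1(F_{2m})=F_{2m}$, $\sigma_1(F_i)=F_{2m-i}$ for $1\le i\le 2m-1$; $\sigma_0(F_i)=F_{2m-i+1}$ for $1\le i\le2m$; $\tau_j(F_i)=F_i$ for all $i,j$. Likewise $\sigma_\infty(E_1)=E_m$, $\sigma_\infty(E_i)=E_{i-1}$ ($2\le i\le m$); $\sigma_1(E_m)=E_m$, $\sigma_1(E_i)=E_{m-i}$ ($1\le i\le m-1$); $\sigma_0(E_i)=E_{m-i+1}$ ($1\le i\le m$); $\tau_j(E_i)=E_i$ for all $i,j$. In particular the set of indices fixed by $\sigma_1$ is contained in $E_m$.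
   Context: Permutation products are read left to right ($\sigma\sigma'$ means first $\sigma$, then $\sigma'$). Monodromy tuple: $\phi_A=A^2:\mathbb{P}^1(\mathbb{C})\to\mathbb{P}^1(\mathbb{C})$ has degree $2n$, is totally ramified over $\infty$, and its finite branch points lie in $\{0,1,b_1,\dots,b_k\}$ with $0\le k\le d-1$. Choosing a base point, a labelling $\{1,\dots,2n\}$ of its fibre, and loops around $0,\infty,1,b_1,\dots,b_k$ generating the fundamental group with product relation $[\gamma_0][\gamma_\infty][\gamma_1][\delta_1]\cdots[\delta_k]=1$, one gets permutations $\sigma_0,\sigma_\infty,\sigma_1,\tau_1,\dots,\tau_k\in S_{2n}$ with $\sigma_0\sigma_\infty\sigma_1\tau_1\cdots\tau_k=\mathrm{id}$, where $\sigma_\infty$ is a $2n$-cycle, $\sigma_0$ has only cycles of even length, $\sigma_1$ fixes exactly $2d$ indices and its other cycles have even length, and the sum of (length$-1$) over all cycles of all $\tau_i$ is at most $d-1$ (so each $\tau_i$ moves at most $2(d-1)$ indices). The tuple is determined up to simultaneous conjugation, and such a labelling always exists. $G_A=\langle\sigma_0,\sigma_\infty,\sigma_1,\tau_1,\dots,\tau_k\rangle\le S_{2n}$ is the monodromy group. A group preserves a partition if each element maps blocks onto blocks. *)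

From mathcomp Require Import all_boot all_fingroup.
Set Implicit Arguments. Unset Strict Implicit. Unset Printing Implicit Defensive.
Local Open Scope group_scope.

(* Convention: the label j in {1,...,2n} is represented by the ordinal
   j-1 : 'I_(n.*2).  Permutation products are read left to right, which
   is exactly mathcomp's convention: (s * t) x = t (s x). *)

Definition ind (T : finType) (s : {perm T}) : nat :=
  \sum_(c in porbits s) (#|c| - 1).

Definition pell_monodromy_tuple (n d : nat)
    (s0 sinf s1 : {perm 'I_(n.*2)}) (k : nat) (tau : 'I_k -> {perm 'I_(n.*2)}) :
    Prop :=
  k <= d - 1 /\
      s0 * sinf * s1 * (\prod_(i < k) tau i) = 1 /\
      [exists x, porbit sinf x == [set: 'I_(n.*2)]] /\
      (forall x, ~~ odd #|porbit s0 x|) /\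
      (#|[set x | s1 x == x]| = d.*2 /\ (forall x, s1 x != x -> ~~ odd #|porbit s1 x|)) /\
      \sum_(i < k) ind (tau i) <= d - 1 /\
      (* Riemann-Hurwitz for a degree-2n cover P^1 -> P^1 (genus 0) *)
      ind s0 + ind sinf + ind s1 + \sum_(i < k) ind (tau i) = (n.*2).*2 - 2.

Definition mono_group (N : nat) (s0 sinf s1 : {perm 'I_N}) (k : nat)
    (tau : 'I_k -> {perm 'I_N}) : {set {perm 'I_N}} :=
  <<[set s0; sinf; s1] :|: [set tau i | i : 'I_k]>>.

Definition preserves_partition (T : finType) (G : {set {perm T}})
    (P : {set {set T}}) : Prop :=
  forall g, g \in G -> forall B, B \in P -> g @: B \in P.

Definition Fblk (N m h : nat) : {set 'I_N} := [set i : 'I_N | i.+1 == h %[mod m.*2]].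
Definition Eblk (N m h : nat) : {set 'I_N} := [set i : 'I_N | i.+1 == h %[mod m]].

Definition Fpart (N m : nat) : {set {set 'I_N}} := [set Fblk N m h.+1 | h : 'I_(m.*2)].
Definition Epart (N m : nat) : {set {set 'I_N}} := [set Eblk N m h.+1 | h : 'I_m].

Arguments pell_monodromy_tuple : clear implicits.

(* Labels are coloured by their residue modulo 2m; each colour
   class has b = n/m >= d points and G permutes the colour classes.
   - Counting cycles: ind s = (#moved points)/2 + excess s, where the
     excess is a nonnegative sum over the moved points.
   - A permutation moving a whole colour class has index >= b > d - 1, so
     every tau_j fixes each colour; one not acting as an involution on the
     colours (and with cycles of even length) has excess >= b.
   - Riemann-Hurwitz bounds excess s0 + excess s1 by d - 1, so s0 and s1
     act as involutions on the colours.  The product relation then shows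
     that s1 x + x + 2 is invariant under the 2n-cycle sinf; it vanishes at
     the label 2n fixed by s1, which gives the action of s1, and then s0.
   - A block-preserving permutation acting on residues by a translation or
     a reflection maps F- and E-blocks as computed from that affine map;
     since E_h = F_h u F_(m+h) this handles both partitions at once. *)

From mathcomp Require Import all_boot all_order all_fingroup all_algebra.
From mathcomp Require Import lra zify.
Set Implicit Arguments. Unset Strict Implicit. Unset Printing Implicit Defensive.
Import Order.TTheory GRing.Theory Num.Theory.

Section CycleExcess.
Variables (T : finType) (s : {perm T}).
Local Open Scope ring_scope.

Lemma card_porbit_fixed x : s x = x -> #|porbit s x| = 1%N.
Proof.
move=> sx; have := uniq_traject_porbit s x; have := card_porbit_neq0 s x.
by case: #|porbit s x| => [|[|l]] //= _; rewrite sx inE eqxx.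
Qed.

Lemma card_porbit_moved x : s x != x -> (2 <= #|porbit s x|)%N.
Proof.
move=> sx; have := iter_porbit s x; have := card_porbit_neq0 s x.
by case: #|porbit s x| => [|[|l]] //= _ sxx; rewrite sxx eqxx in sx.
Qed.

(* The excess of s: each moved point contributes 1/2 - 1/(length of its
   cycle), which vanishes exactly on 2-cycles. *)
Definition excess : rat :=
  \sum_(x | s x != x) (2^-1 - (#|porbit s x|%:R)^-1).

Lemma inv_card_porbit_moved x : s x != x -> (#|porbit s x|%:R : rat)^-1 <= 2^-1.
Proof.
move=> sx; rewrite lef_pV2 ?posrE ?ltr0n ?ler_nat ?card_porbit_moved //.
by rewrite lt0n card_porbit_neq0.
Qed.

Lemma excess_ge0 : 0 <= excess.
Proof. by apply: sumr_ge0 => x sx; rewrite subr_ge0 inv_card_porbit_moved. Qed.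

Lemma ind_excess :
  (ind s)%:R = (#|T|%:R - #|[set x | s x == x]|%:R) / 2 + excess.
Proof.
pose c : rat := \sum_x (#|porbit s x|%:R)^-1.
have ind_c : (ind s)%:R = #|T|%:R - c.
  rewrite /ind /c natr_sum -sumr_const -sumrB (partition_big_imset (porbit s)) /=.
  apply: eq_bigr => _ /imsetP [y _ ->].
  rewrite (eq_bigr (fun _ => 1 - (#|porbit s y|%:R)^-1)); last first.
    by move=> x /eqP ->.
  rewrite sumr_const.
  have -> : #|[pred x | porbit s x == porbit s y]| = #|porbit s y|.
    by apply: eq_card => x; rewrite !inE eq_porbit_mem.
  have py_gt0 : (0 < #|porbit s y|)%N by rewrite lt0n card_porbit_neq0.
  rewrite -[RHS]mulr_natr mulrBl mul1r mulVf ?pnatr_eq0 -?lt0n //.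
  by rewrite natrB.
have c_split : c + excess = #|[set x | s x == x]|%:R
                            + (#|T|%:R - #|[set x | s x == x]|%:R) / 2.
  rewrite /c /excess (bigID (fun x => s x == x)) /= -addrA -big_split /=.
  rewrite [X in X + _](eq_bigr (fun _ => 1)); last first.
    by move=> x /eqP /card_porbit_fixed ->; rewrite invr1.
  rewrite [X in _ + X](eq_bigr (fun _ => 2^-1)); last first.
    by move=> x _; rewrite addrC subrK.
  rewrite !sumr_const -(cardC [pred x | s x == x]) cardsE.
  by rewrite natrD -mulr_natl; lra.
lra.
Qed.

Lemma excess_ge_set (S : {set T}) (l : nat) : (0 < l)%N ->
  (forall x, x \in S -> s x != x /\ (l <= #|porbit s x|)%N) ->
  #|S|%:R * (2^-1 - (l%:R)^-1) <= excess.
Proof.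
move=> l_gt0 hS.
apply: (@le_trans _ _ (\sum_(x in S) (2^-1 - (#|porbit s x|%:R)^-1))).
  rewrite mulrC mulr_natr -sumr_const; apply: ler_sum => x /hS [_ lx].
  by rewrite lerB // lef_pV2 ?posrE ?ltr0n ?ler_nat //; apply: leq_trans lx.
rewrite /excess big_mkcond [X in _ <= X]big_mkcond /=; apply: ler_sum => x _.
case: ifP => [/hS [-> //] | _]; case: ifP => // sx.
by rewrite subr_ge0 inv_card_porbit_moved.
Qed.

Lemma ind_full_cycle : [exists x, porbit s x == [set: T]] -> ind s = #|T|.-1.
Proof.
case/existsP => x0 /eqP full; rewrite /ind.
have -> : porbits s = [set [set: T]].
  apply/setP => B; rewrite inE; apply/imsetP/eqP => [[y _ ->] | ->].
    by apply/eqP; rewrite -full eq_porbit_mem full inE.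
  by exists x0.
by rewrite big_set1 cardsT subn1.
Qed.

Lemma full_cycle_ind (P : pred T) x0 :
  [exists x, porbit s x == [set: T]] -> P x0 -> (forall x, P x -> P (s x)) ->
  forall x, P x.
Proof.
case/existsP => z /eqP full Px0 Ps x.
have orbit_x0 : porbit s x0 = [set: T].
  by rewrite -full; apply/eqP; rewrite eq_porbit_mem full inE.
have : x \in porbit s x0 by rewrite orbit_x0 inE.
case/porbitP => i ->; elim: i => [|i IH]; first by rewrite expg0 perm1.
by rewrite expgSr permM; apply: Ps.
Qed.
End CycleExcess.

Section ColourClasses.
Variables (T : finType) (r : T -> nat) (b : nat).
Local Open Scope ring_scope.

Hypothesis class_large : forall x, (b <= #|[set y | r y == r x]|)%N.

Lemma card_colours (xs : seq T) : uniq (map r xs) ->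
  (b * size xs <= #|[set y | r y \in map r xs]|)%N.
Proof.
elim: xs => [|x xs IH] /=; first by rewrite muln0.
case/andP => x_new /IH {}IH.
have -> : [set y | r y \in r x :: map r xs]
          = [set y | r y == r x] :|: [set y | r y \in map r xs].
  by apply/setP => y; rewrite !inE.
rewrite cardsU.
have -> : [set y | r y == r x] :&: [set y | r y \in map r xs] = set0.
  apply/setP => y; rewrite !inE; apply/negbTE/negP => /andP [/eqP -> x_old].
  by rewrite x_old in x_new.
by rewrite cards0 subn0 mulnS leq_add.
Qed.

Definition respects_colours (s : {perm T}) : Prop :=
  forall x y, (r (s x) == r (s y)) = (r x == r y).

(* A permutation moving one colour class to another moves both classes
   entirely, hence at least 2b points, so its index is at least b. *)
Lemma ind_ge_of_moved_colour (s : {perm T}) x :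
  respects_colours s -> r (s x) != r x -> (b <= ind s)%N.
Proof.
move=> s_resp sx_new.
have moved : (b * 2 <= #|~: [set y | s y == y]|)%N.
  apply: leq_trans (card_colours (xs := [:: x; s x]) _) (subset_leq_card _).
    by rewrite /= inE eq_sym sx_new.
  apply/subsetP => y; rewrite !inE => /orP [] /eqP ry.
    apply: contra sx_new => /eqP sy.
    by have := s_resp y x; rewrite sy ry eqxx eq_sym => ->.
  apply: contra sx_new => /eqP sy.
  by have := s_resp y x; rewrite sy ry eqxx => <-.
have /(congr1 (fun k => k%:R : rat)) := cardsC [set y | s y == y].
move: moved (excess_ge0 s); rewrite -!(ler_nat rat) (ind_excess s) natrM natrD.
lra.
Qed.

Section NonInvolutive.
Variable s : {perm T}.
Hypothesis s_resp : respects_colours s.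
Hypothesis s_even : forall x, s x != x -> ~~ odd #|porbit s x|.

Let S := [set y | r (s (s y)) != r y].

Lemma S_colour_closed y z : y \in S -> r z = r y -> z \in S.
Proof.
rewrite !inE => yS zy.
have e1 : r (s z) = r (s y) by apply/eqP; rewrite s_resp zy.
have e2 : r (s (s z)) = r (s (s y)) by apply/eqP; rewrite s_resp e1.
by rewrite e2 zy.
Qed.

Lemma S_succ y : y \in S -> s y \in S.
Proof. by rewrite !inE s_resp. Qed.

Lemma S_colour_moved y : y \in S -> r y != r (s y).
Proof.
rewrite inE; apply: contra => /eqP e.
by rewrite e s_resp e.
Qed.

Lemma S_colour_moved2 y : y \in S -> r y != r (s (s y)).
Proof. by rewrite inE eq_sym. Qed.

Lemma S_moved y : y \in S -> s y != y.
Proof. by move/S_colour_moved; apply: contraNneq => ->. Qed.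

(* An s-cycle through S has length at least 4: it is even, and of length
   2 the colour would be restored by s^2. *)
Lemma S_cycle_ge4 y : y \in S -> (4 <= #|porbit s y|)%N.
Proof.
move=> yS; have sy := S_moved yS.
have := card_porbit_moved sy; have := s_even sy; have := iter_porbit s y.
case: #|porbit s y| => [|[|[|[|l]]]] //= ssy.
by move: yS; rewrite inE ssy eqxx.
Qed.

Lemma card_S_ge xs : all (mem S) xs -> uniq (map r xs) -> (b * size xs <= #|S|)%N.
Proof.
move=> /allP xsS /card_colours le_xs; apply: leq_trans le_xs (subset_leq_card _).
by apply/subsetP => z; rewrite inE => /mapP [y /xsS yS /S_colour_closed]; apply.
Qed.

(* A 4-cycle through S meets four colour classes, all inside S, and every
   point of S contributes at least 1/2 - 1/4 to the excess. *)
Lemma excess_ge_4cycle y : y \in S -> #|porbit s y| = 4%N -> b%:R <= excess s.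
Proof.
move=> yS y4; have y1S := S_succ yS; have y2S := S_succ y1S.
have y3S := S_succ y2S.
have y4S : y = s (s (s (s y))) by have := iter_porbit s y; rewrite y4.
have size_S : (b * 4 <= #|S|)%N.
  apply: (card_S_ge (xs := [:: y; s y; s (s y); s (s (s y))])).
    by rewrite /= yS y1S y2S y3S.
  rewrite /= !inE !negb_or !S_colour_moved ?S_colour_moved2 ?S_succ //= !andbT.
  apply: contra (S_colour_moved yS) => /eqP e.
  by rewrite {1}y4S s_resp e.
apply: le_trans _ (excess_ge_set (S := S) (l := 4) _ _) => //.
  by move: size_S; rewrite -(ler_nat rat) natrM; lra.
by move=> z zS; rewrite S_moved ?S_cycle_ge4.
Qed.

(* Without 4-cycles through S, every point of S lies on a cycle of length
   at least 6 and contributes at least 1/3, while three colour classes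
   x, s x, s^2 x lie inside S. *)
Lemma excess_ge_no_4cycle x : x \in S ->
  (forall z, z \in S -> #|porbit s z| != 4%N) -> b%:R <= excess s.
Proof.
move=> xS no4.
have size_S : (b * 3 <= #|S|)%N.
  apply: (card_S_ge (xs := [:: x; s x; s (s x)])).
    by rewrite /= xS S_succ ?S_succ.
  by rewrite /= !inE !negb_or !S_colour_moved ?S_colour_moved2 ?S_succ.
apply: le_trans _ (excess_ge_set (S := S) (l := 6) _ _) => //.
  by move: size_S; rewrite -(ler_nat rat) natrM; lra.
move=> z zS; have sz := S_moved zS; split=> //.
have := S_cycle_ge4 zS; have := s_even sz; have := no4 z zS.
by case: #|porbit s z| => [|[|[|[|[|[|l]]]]]].
Qed.

Lemma excess_ge_not_involutive :
  (exists x, r (s (s x)) != r x) -> b%:R <= excess s.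
Proof.
move=> [x xS]; have {}xS : x \in S by rewrite inE.
have [/exists_inP [y yS /eqP y4] | /exists_inPn no4] :=
  boolP [exists y in S, #|porbit s y| == 4%N].
  exact: excess_ge_4cycle yS y4.
exact: excess_ge_no_4cycle xS no4.
Qed.
End NonInvolutive.
End ColourClasses.

(* In 'I_(M * b) every residue class modulo M has b elements
   x mod M, x mod M + M, ..., x mod M + (b-1) M. *)
Lemma card_residue_class (N M b : nat) (x : 'I_N) : N = M * b ->
  b <= #|[set y : 'I_N | y %% M == x %% M]|.
Proof.
move=> NMb; have M_gt0 : 0 < M by have := ltn_ord x; rewrite {2}NMb; lia.
have xM := ltn_pmod x M_gt0.
have lt_N (j : 'I_b) : x %% M + j * M < N.
  by have := ltn_ord j; move: (x %% M) xM => u; rewrite NMb; nia.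
pose f (j : 'I_b) : 'I_N := insubd x (x %% M + j * M).
have val_f j : val (f j) = x %% M + j * M by rewrite val_insubd lt_N.
have f_inj : injective f.
  move=> i j /(congr1 val); rewrite !val_f => /eqP.
  by rewrite eqn_add2l eqn_pmul2r // => /eqP /val_inj.
rewrite -[b in b <= _]card_ord -(card_imset _ f_inj).
apply/subset_leq_card/subsetP => _ /imsetP [j _ ->].
by rewrite inE val_f addnC modnMDl modn_mod.
Qed.

Lemma modn_congrD (d a a' b b' : nat) :
  a = a' %[mod d] -> b = b' %[mod d] -> a + b = a' + b' %[mod d].
Proof. by move=> ea eb; rewrite -modnDm ea eb modnDm. Qed.

Lemma modn_lt_double (w D : nat) : w < D.*2 -> w %% D = if w < D then w else w - D.
Proof.
move=> wD; case: ltnP => [|Dw]; first exact: modn_small.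
by rewrite -{1}(subnKC Dw) modnDl modn_small //; lia.
Qed.

Lemma eqn_mod_half (m a b : nat) : 0 < m ->
  (a == b %[mod m]) = (a == b %[mod m.*2]) || (a == m + b %[mod m.*2]).
Proof.
move=> m_gt0; have m_dvd : m %| m.*2 by rewrite -muln2 dvdn_mulr.
rewrite -(modn_dvdm a m_dvd) -(modn_dvdm b m_dvd) -(modnDmr m b).
have : a %% m.*2 < m.*2 by rewrite ltn_pmod // double_gt0.
have : b %% m.*2 < m.*2 by rewrite ltn_pmod // double_gt0.
move: (a %% m.*2) (b %% m.*2) => u v vM uM.
rewrite !modn_lt_double //; last by lia.
by do 3 case: ltnP => ?; apply/eqP/orP; lia.
Qed.

Lemma preserves_partition_gen (T : finType) (A : {set {perm T}})
    (P : {set {set T}}) :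
  (forall g, g \in A -> forall B, B \in P -> g @: B \in P) ->
  preserves_partition <<A>>%g P.
Proof.
move=> genP.
pose H := [set g : {perm T} | [forall B in P, g @: B \in P]].
have H_group : group_set H.
  apply/group_setP; split.
    by rewrite inE; apply/forall_inP => B BP; rewrite (eq_imset _ (@perm1 T)) imset_id.
  move=> g h; rewrite !inE => /forall_inP gP /forall_inP hP.
  apply/forall_inP => B BP.
  by rewrite (eq_imset _ (permM g h)) imset_comp hP ?gP.
have /subsetP AH : <<A>>%g \subset Group H_group.
  by rewrite gen_subG; apply/subsetP => g gA; rewrite inE; apply/forall_inP; apply: genP.
by move=> g /AH; rewrite inE => /forall_inP.
Qed.

(* The representative in {0, ..., d-1} of the labels congruent to h,
   labels being shifted by one with respect to positions. *)
Definition label_rep (d : nat) (d_gt0 : 0 < d) (h : nat) : 'I_d :=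
  Ordinal (ltn_pmod (h + d.-1) d_gt0).

Lemma label_rep_succ d (d_gt0 : 0 < d) h : (label_rep d_gt0 h).+1 = h %[mod d].
Proof. by rewrite /= -addn1 modnDml -addnA addn1 prednK // modnDr. Qed.

Section Blocks.
Variables (N m : nat).
Hypothesis m_gt0 : 0 < m.
Hypothesis m2_le_N : m.*2 <= N.
Local Notation M := m.*2.
Local Notation F := (Fblk N m).
Local Notation E := (Eblk N m).

Definition maps_Fblocks (g : {perm 'I_N}) : Prop :=
  forall B, B \in Fpart N m -> g @: B \in Fpart N m.

Lemma M_gt0 : 0 < M. Proof. by rewrite double_gt0. Qed.

Lemma Fblk_mod h h' : h = h' %[mod M] -> F h = F h'.
Proof. by move=> e; apply/setP => x; rewrite !inE e. Qed.

Lemma Fblk_in_Fpart h : F h \in Fpart N m.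
Proof. by apply/imsetP; exists (label_rep M_gt0 h); rewrite // (Fblk_mod (label_rep_succ _ h)). Qed.

Lemma Fblk_self (x : 'I_N) : x \in F x.+1.
Proof. by rewrite inE. Qed.

Lemma Fblk_witness h : exists x : 'I_N, x \in F h.
Proof.
have lt_N : label_rep M_gt0 h < N by apply: leq_trans (ltn_ord _) m2_le_N.
by exists (Ordinal lt_N); rewrite inE label_rep_succ.
Qed.

Lemma Fblk_meet (x : 'I_N) h h' : x \in F h -> x \in F h' -> F h = F h'.
Proof. by rewrite !inE => /eqP e /eqP e'; apply: Fblk_mod; rewrite -e e'. Qed.

Lemma Fblk_image g h h' : maps_Fblocks g ->
  (forall x, x \in F h -> g x \in F h') -> g @: F h = F h'.
Proof.
move=> g_maps g_into; have /imsetP [j _ gF] := g_maps _ (Fblk_in_Fpart h).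
have [x xh] := Fblk_witness h.
by rewrite gF; apply: (Fblk_meet (x := g x)); rewrite -?gF ?imset_f ?g_into.
Qed.

Lemma maps_Fblocks_mod g (x y : 'I_N) :
  maps_Fblocks g -> x = y %[mod M] -> g x = g y %[mod M].
Proof.
move=> g_maps xy; have /imsetP [j _ gF] := g_maps _ (Fblk_in_Fpart x.+1).
have : g x \in F j.+1 by rewrite -gF imset_f ?Fblk_self.
have : g y \in F j.+1.
  by rewrite -gF imset_f // inE -[y.+1]addn1 -[x.+1]addn1 eqn_modDr xy.
rewrite !inE => /eqP gy /eqP gx.
by apply/eqP; rewrite -(eqn_modDr 1) !addn1 gx gy.
Qed.

Lemma Fblk_translate g c h h' : maps_Fblocks g ->
  (forall x, g x + c = x %[mod M]) -> h' + c = h %[mod M] -> g @: F h = F h'.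
Proof.
move=> g_maps g_res hh; apply: Fblk_image => // x; rewrite !inE => /eqP xh.
rewrite -(eqn_modDr c) hh -xh addSn -[(_ + c).+1]addn1 -[x.+1]addn1 eqn_modDr.
exact/eqP.
Qed.

Lemma Fblk_reflect g c h h' : maps_Fblocks g ->
  (forall x, g x + x + c = 0 %[mod M]) -> h' + h + c = 2 %[mod M] ->
  g @: F h = F h'.
Proof.
move=> g_maps g_res hh; apply: Fblk_image => // x; rewrite !inE => /eqP xh.
rewrite -(eqn_modDr (h + c)) [h' + _]addnA hh -modnDmr.
rewrite (modn_congrD (esym xh) (erefl (c %% M))) modnDmr.
have -> : (g x).+1 + (x.+1 + c) = g x + x + c + 2 by lia.
by rewrite -modnDml g_res mod0n.
Qed.

Lemma Eblk_Fblk h : E h = F h :|: F (m + h).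
Proof. by apply/setP => x; rewrite !inE eqn_mod_half. Qed.

Lemma Eblk_in_Epart h : E h \in Epart N m.
Proof.
apply/imsetP; exists (label_rep m_gt0 h) => //.
by apply/setP => x; rewrite !inE label_rep_succ.
Qed.

Lemma Eblk_translate g c h h' : maps_Fblocks g ->
  (forall x, g x + c = x %[mod M]) -> h' + c = h %[mod m] -> g @: E h = E h'.
Proof.
move=> g_maps g_res /eqP; rewrite eqn_mod_half // => /orP [] /eqP hh.
  rewrite !Eblk_Fblk imsetU (Fblk_translate g_maps g_res hh).
  rewrite (Fblk_translate (h := m + h) (h' := m + h') g_maps g_res) //.
  by rewrite -addnA -modnDmr hh modnDmr.
rewrite !Eblk_Fblk imsetU (Fblk_translate (h := m + h) (h' := h') g_maps g_res hh).
rewrite (Fblk_translate (h := h) (h' := m + h') g_maps g_res) 1?setUC //.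
by rewrite -addnA -modnDmr hh modnDmr addnA addnn modnDl.
Qed.

Lemma Eblk_reflect g c h h' : maps_Fblocks g ->
  (forall x, g x + x + c = 0 %[mod M]) -> h' + h + c = 2 %[mod m] ->
  g @: E h = E h'.
Proof.
move=> g_maps g_res /eqP; rewrite eqn_mod_half // => /orP [] /eqP hh.
  rewrite !Eblk_Fblk imsetU (Fblk_reflect g_maps g_res hh).
  rewrite (Fblk_reflect (h := m + h) (h' := m + h') g_maps g_res) //.
  have -> : m + h' + (m + h) + c = M + (h' + h + c) by lia.
  by rewrite -modnDmr hh modnDmr modnDl.
have shift a : a = m + 2 %[mod M] -> m + a = 2 %[mod M].
  by move=> e; rewrite -modnDmr e modnDmr addnA addnn modnDl.
rewrite !Eblk_Fblk imsetU (Fblk_reflect (h := h) (h' := m + h') g_maps g_res).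
  rewrite (Fblk_reflect (h := m + h) (h' := h') g_maps g_res) 1?setUC //.
  have -> : h' + (m + h) + c = m + (h' + h + c) by lia.
  exact: shift.
have -> : m + h' + h + c = m + (h' + h + c) by lia.
exact: shift.
Qed.
End Blocks.

Section Monodromy.
Variables (n d m k : nat) (s0 sinf s1 : {perm 'I_(n.*2)}).
Variable tau : 'I_k -> {perm 'I_(n.*2)}.
Local Notation N := n.*2.
Local Notation M := m.*2.
Local Notation G := (mono_group s0 sinf s1 tau).
Local Notation res := (fun x : 'I_N => x %% M).

Hypothesis d_ge2 : 2 <= d.
Hypothesis m_dvd_n : m %| n.
Hypothesis d_le_quot : d <= n %/ m.
Hypothesis G_preserves_F : preserves_partition G (Fpart N m).

Lemma m_gt0 : 0 < m.
Proof. by move: d_le_quot; case: m => [|//]; rewrite divn0; lia. Qed.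

Lemma N_eq : N = M * (n %/ m).
Proof. by rewrite -{1}(divnK m_dvd_n); move: (n %/ m) => b; lia. Qed.

Lemma M_le_N : M <= N.
Proof. by rewrite N_eq leq_pmulr //; lia. Qed.

Lemma M_dvd_N : M %| N.
Proof. by rewrite N_eq dvdn_mulr. Qed.

Lemma N_gt0 : 0 < N.
Proof. by apply: leq_trans M_le_N; rewrite double_gt0 m_gt0. Qed.

Lemma s0_in_G : s0 \in G. Proof. by apply: mem_gen; rewrite !inE eqxx. Qed.
Lemma sinf_in_G : sinf \in G. Proof. by apply: mem_gen; rewrite !inE eqxx orbT. Qed.
Lemma s1_in_G : s1 \in G. Proof. by apply: mem_gen; rewrite !inE eqxx !orbT. Qed.
Lemma tau_in_G j : tau j \in G.
Proof. by apply: mem_gen; rewrite !inE imset_f ?orbT. Qed.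

Lemma G_maps_Fblocks g : g \in G -> maps_Fblocks m g.
Proof. exact: G_preserves_F. Qed.

Lemma G_respects g : g \in G -> respects_colours res g.
Proof.
move=> gG x y /=; apply/eqP/eqP => [gxy | xy].
  by have := maps_Fblocks_mod m_gt0 (G_maps_Fblocks (groupVr gG)) gxy; rewrite !permK.
exact: (maps_Fblocks_mod m_gt0 (G_maps_Fblocks gG) xy).
Qed.

Lemma res_class_large (x : 'I_N) : n %/ m <= #|[set y | res y == res x]|.
Proof. exact: card_residue_class N_eq. Qed.

Hypothesis tau_budget : \sum_(i < k) ind (tau i) <= d - 1.

(* Each tau_j fixes every residue class: moving one would force
   ind tau_j >= n/m >= d. *)
Lemma tau_res j x : tau j x = x %[mod M].
Proof.
apply/eqP/negPn/negP => moved.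
have ind_large :=
  ind_ge_of_moved_colour res_class_large (G_respects (tau_in_G j)) moved.
have ind_small : ind (tau j) <= d - 1.
  by apply: leq_trans tau_budget; rewrite (bigD1 j) //= leq_addr.
have : d <= d - 1 := leq_trans d_le_quot (leq_trans ind_large ind_small).
lia.
Qed.

Hypothesis s0_even : forall x, ~~ odd #|porbit s0 x|.
Hypothesis s1_fix : #|[set x | s1 x == x]| = d.*2.
Hypothesis s1_even : forall x, s1 x != x -> ~~ odd #|porbit s1 x|.
Hypothesis sinf_cycle : [exists x, porbit sinf x == [set: 'I_N]].
Hypothesis hurwitz :
  ind s0 + ind sinf + ind s1 + \sum_(i < k) ind (tau i) = N.*2 - 2.

(* Riemann-Hurwitz leaves a total excess of at most d - 1 to s0 and s1. *)
Lemma excess_budget : (excess s0 + excess s1 <= (d - 1)%:R :> rat)%R.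
Proof.
have fix0 : #|[set x | s0 x == x]| = 0.
  apply/eqP; rewrite cards_eq0; apply/eqP/setP => x; rewrite !inE.
  by apply/negP => /eqP /card_porbit_fixed s0x; have := s0_even x; rewrite s0x.
have ind_sum : ind s0 + ind s1 <= N.-1.
  by move: hurwitz; rewrite (ind_full_cycle sinf_cycle) card_ord; lia.
have e0 := ind_excess s0; have e1 := ind_excess s1.
rewrite card_ord fix0 in e0; rewrite card_ord s1_fix in e1.
move: ind_sum; rewrite -(ler_nat rat) natrD e0 e1 -subn1 natrB ?N_gt0 //.
have -> : (N%:R = 2 * n%:R :> rat)%R by rewrite -muln2 natrM mulrC.
have -> : (d.*2%:R = 2 * d%:R :> rat)%R by rewrite -muln2 natrM mulrC.
rewrite natrB; last by lia.
by lra.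
Qed.

(* s0 and s1 induce involutions on the residues: otherwise their excess
   would be at least n/m >= d. *)
Lemma s0_res_involutive x : s0 (s0 x) = x %[mod M].
Proof.
apply/eqP/negPn/negP => not_inv.
have := excess_ge_not_involutive res_class_large (G_respects s0_in_G)
  (fun x _ => s0_even x) (ex_intro _ x not_inv).
have := excess_budget; have := excess_ge0 s1.
move: d_le_quot d_ge2; rewrite -!(ler_nat rat) natrB; last by lia.
by lra.
Qed.

Lemma s1_res_involutive x : s1 (s1 x) = x %[mod M].
Proof.
apply/eqP/negPn/negP => not_inv.
have := excess_ge_not_involutive res_class_large (G_respects s1_in_G)
  s1_even (ex_intro _ x not_inv).
have := excess_budget; have := excess_ge0 s0.
move: d_le_quot d_ge2; rewrite -!(ler_nat rat) natrB; last by lia.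
by lra.
Qed.

Hypothesis product : (s0 * sinf * s1 * \prod_(i < k) tau i = 1)%g.
Hypothesis sinf_label : forall i : 'I_N, val (sinf i) = (i + N.-1) %% N.
Hypothesis s1_fixes_last : forall x : 'I_N, val x = N.-1 -> s1 x = x.

Lemma sinf_res x : sinf x + 1 = x %[mod M].
Proof.
rewrite sinf_label -modnDml (modn_dvdm _ M_dvd_N) modnDml -addnA addn1.
by rewrite prednK ?N_gt0 // -modnDmr (eqP M_dvd_N) addn0.
Qed.

Lemma prod_res x : s1 (sinf (s0 x)) = x %[mod M].
Proof.
have tau_prod y : (\prod_(i < k) tau i)%g y = y %[mod M].
  move: y; apply: (big_ind (fun g : {perm 'I_N} => forall y, g y = y %[mod M])) => /=.
  - by move=> y; rewrite perm1.
  - by move=> g g' g_res g'_res y; rewrite permM g'_res g_res.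
  - by move=> i _ y; apply: tau_res.
have /(congr1 (fun g : {perm 'I_N} => g x)) := product.
by rewrite !permM perm1 => e; rewrite -{2}e tau_prod.
Qed.

Lemma s0_s1_res x : s0 x = s1 x + 1 %[mod M].
Proof.
have e : sinf (s0 x) = s1 x %[mod M].
  rewrite -(s1_res_involutive (sinf (s0 x))).
  exact: (maps_Fblocks_mod m_gt0 (G_maps_Fblocks s1_in_G) (prod_res x)).
by rewrite -(sinf_res (s0 x)) -modnDml e modnDml.
Qed.

Lemma s1_sinf_res x : s1 (sinf x) = s0 x %[mod M].
Proof.
rewrite -(prod_res (s0 x)).
apply: (maps_Fblocks_mod m_gt0 (G_maps_Fblocks s1_in_G)).
apply: (maps_Fblocks_mod m_gt0 (G_maps_Fblocks sinf_in_G)).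
by rewrite s0_res_involutive.
Qed.

(* s1 acts on residues as the reflection x |-> -x - 2: the quantity
   s1 x + x + 2 is invariant under sinf, vanishes at the label 2n fixed by
   s1, and sinf is transitive. *)
Lemma s1_res x : s1 x + x + 2 = 0 %[mod M].
Proof.
have last_lt : N.-1 < N by rewrite prednK ?N_gt0.
pose p := Ordinal last_lt.
apply/eqP; move: x; apply: (full_cycle_ind (x0 := p) sinf_cycle) => /=.
  rewrite (s1_fixes_last (x := p)) //= mod0n.
  have -> : N.-1 + N.-1 + 2 = N + N by have := N_gt0; lia.
  exact: dvdn_add M_dvd_N M_dvd_N.
move=> y /eqP y_res; apply/eqP; rewrite -y_res.
have -> : s1 y + y + 2 = s1 y + 1 + sinf y + 2 %[mod M].
  apply: modn_congrD => //; rewrite -addnA [1 + _]addnC.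
  by apply: modn_congrD => //; rewrite sinf_res.
do 2 apply: modn_congrD => //.
by rewrite s1_sinf_res s0_s1_res.
Qed.

Lemma s0_res x : s0 x + x + 1 = 0 %[mod M].
Proof.
rewrite -(s1_res x) (_ : s1 x + x + 2 = s1 x + 1 + (x + 1)); last by lia.
by rewrite -addnA; apply: modn_congrD => //; apply: s0_s1_res.
Qed.

Lemma tau_res0 j x : tau j x + 0 = x %[mod M].
Proof. by rewrite addn0 tau_res. Qed.

Lemma F_images :
  sinf @: Fblk N m 1 = Fblk N m M /\
  (forall i, 2 <= i <= M -> sinf @: Fblk N m i = Fblk N m i.-1) /\
  s1 @: Fblk N m M = Fblk N m M /\
  (forall i, 1 <= i <= M - 1 -> s1 @: Fblk N m i = Fblk N m (M - i)) /\
  (forall i, 1 <= i <= M -> s0 @: Fblk N m i = Fblk N m (M - i + 1)) /\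
  (forall j i, 1 <= i <= M -> tau j @: Fblk N m i = Fblk N m i).
Proof.
have sinfF := Fblk_translate m_gt0 M_le_N (G_maps_Fblocks sinf_in_G) sinf_res.
have s1F := Fblk_reflect m_gt0 M_le_N (G_maps_Fblocks s1_in_G) s1_res.
have s0F := Fblk_reflect m_gt0 M_le_N (G_maps_Fblocks s0_in_G) s0_res.
split; first by apply: sinfF; rewrite modnDl.
split; first by move=> i /andP [i_ge2 _]; apply: sinfF; rewrite addn1 prednK //; lia.
split; first by apply: s1F; rewrite -addnA !modnDl.
split; first by move=> i /andP [_ i_le]; apply: s1F; rewrite subnK ?modnDl //; lia.
split.
  move=> i /andP [_ i_le]; apply: s0F.
  have -> : M - i + 1 + i + 1 = M + 2 by lia.
  by rewrite modnDl.
move=> j i _.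
apply: (Fblk_translate m_gt0 M_le_N (G_maps_Fblocks (tau_in_G j)) (tau_res0 j)).
by rewrite addn0.
Qed.

Lemma E_images :
  sinf @: Eblk N m 1 = Eblk N m m /\
  (forall i, 2 <= i <= m -> sinf @: Eblk N m i = Eblk N m i.-1) /\
  s1 @: Eblk N m m = Eblk N m m /\
  (forall i, 1 <= i <= m - 1 -> s1 @: Eblk N m i = Eblk N m (m - i)) /\
  (forall i, 1 <= i <= m -> s0 @: Eblk N m i = Eblk N m (m - i + 1)) /\
  (forall j i, 1 <= i <= m -> tau j @: Eblk N m i = Eblk N m i).
Proof.
have sinfE := Eblk_translate m_gt0 M_le_N (G_maps_Fblocks sinf_in_G) sinf_res.
have s1E := Eblk_reflect m_gt0 M_le_N (G_maps_Fblocks s1_in_G) s1_res.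
have s0E := Eblk_reflect m_gt0 M_le_N (G_maps_Fblocks s0_in_G) s0_res.
split; first by apply: sinfE; rewrite modnDl.
split; first by move=> i /andP [i_ge2 _]; apply: sinfE; rewrite addn1 prednK //; lia.
split; first by apply: s1E; rewrite -addnA !modnDl.
split; first by move=> i /andP [_ i_le]; apply: s1E; rewrite subnK ?modnDl //; lia.
split.
  move=> i /andP [_ i_le]; apply: s0E.
  have -> : m - i + 1 + i + 1 = m + 2 by lia.
  by rewrite modnDl.
move=> j i _.
apply: (Eblk_translate m_gt0 M_le_N (G_maps_Fblocks (tau_in_G j)) (tau_res0 j)).
by rewrite addn0.
Qed.

Lemma G_preserves_E : preserves_partition G (Epart N m).
Proof.
apply: preserves_partition_gen => g gens _ /imsetP [j _ ->].
have j_lt := ltn_ord j.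
case/setUP: gens => [|/imsetP [i _ ->]]; last first.
  rewrite (Eblk_translate (h' := j.+1) m_gt0 M_le_N
             (G_maps_Fblocks (tau_in_G i)) (tau_res0 i)) ?addn0 //.
  exact: Eblk_in_Epart _ m_gt0 _.
rewrite !inE -orbA; case/or3P => /eqP ->.
- rewrite (Eblk_reflect (h' := m - j.+1 + 1) m_gt0 M_le_N
             (G_maps_Fblocks s0_in_G) s0_res) ?(Eblk_in_Epart _ m_gt0) //.
  have -> : m - j.+1 + 1 + j.+1 + 1 = m + 2 by lia.
  by rewrite modnDl.
- rewrite (Eblk_translate (h' := j.+1 + m.-1) m_gt0 M_le_N
             (G_maps_Fblocks sinf_in_G) sinf_res) ?(Eblk_in_Epart _ m_gt0) //.
  by rewrite -addnA addn1 prednK ?m_gt0 // modnDr.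
rewrite (Eblk_reflect (h' := m - j.+1) m_gt0 M_le_N
           (G_maps_Fblocks s1_in_G) s1_res) ?(Eblk_in_Epart _ m_gt0) //.
by rewrite subnK ?modnDl.
Qed.

(* A fixed point x of s1 satisfies 2 (x + 1) = 0 mod 2m, so its label
   x + 1 lies in E_m. *)
Lemma s1_fixed_in_Em : forall x, s1 x = x -> x \in Eblk N m m.
Proof.
move=> x fx; have := s1_res x; rewrite fx (_ : x + x + 2 = (x.+1).*2); last by lia.
rewrite mod0n => /eqP; rewrite -/(dvdn M _) -!muln2 dvdn_pmul2r // => m_dvd.
by rewrite inE modnn.
Qed.
End Monodromy.

Theorem lemma7p1 (d n : nat) (s0 sinf s1 : {perm 'I_(n.*2)}) (k : nat)
    (tau : 'I_k -> {perm 'I_(n.*2)}) (m : nat) :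
  (2 <= d)%N ->
  pell_monodromy_tuple n d s0 sinf s1 k tau ->
  (* labelling: sinf = (2n, 2n-1, ..., 1), i.e. j |-> j-1 and 1 |-> 2n *)
  (forall i : 'I_(n.*2), val (sinf i) = (i + (n.*2).-1) %% n.*2) ->
  (* 2n is fixed by s1 and by every tau_i *)
  (forall x : 'I_(n.*2), val x = (n.*2).-1 -> s1 x = x /\ forall j, tau j x = x) ->
  (m %| n)%N -> (d <= n %/ m)%N ->
  preserves_partition (mono_group s0 sinf s1 tau) (Fpart (n.*2) m) ->
  preserves_partition (mono_group s0 sinf s1 tau) (Epart (n.*2) m)
  /\ (sinf @: Fblk (n.*2) m 1 = Fblk (n.*2) m m.*2 /\
        (forall i, (2 <= i <= m.*2)%N -> sinf @: Fblk (n.*2) m i = Fblk (n.*2) m i.-1) /\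
        s1 @: Fblk (n.*2) m m.*2 = Fblk (n.*2) m m.*2 /\
        (forall i, (1 <= i <= m.*2 - 1)%N -> s1 @: Fblk (n.*2) m i = Fblk (n.*2) m (m.*2 - i)) /\
        (forall i, (1 <= i <= m.*2)%N -> s0 @: Fblk (n.*2) m i = Fblk (n.*2) m (m.*2 - i + 1)) /\
        (forall j i, (1 <= i <= m.*2)%N -> tau j @: Fblk (n.*2) m i = Fblk (n.*2) m i))
  /\ (sinf @: Eblk (n.*2) m 1 = Eblk (n.*2) m m /\
        (forall i, (2 <= i <= m)%N -> sinf @: Eblk (n.*2) m i = Eblk (n.*2) m i.-1) /\
        s1 @: Eblk (n.*2) m m = Eblk (n.*2) m m /\
        (forall i, (1 <= i <= m - 1)%N -> s1 @: Eblk (n.*2) m i = Eblk (n.*2) m (m - i)) /\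
        (forall i, (1 <= i <= m)%N -> s0 @: Eblk (n.*2) m i = Eblk (n.*2) m (m - i + 1)) /\
        (forall j i, (1 <= i <= m)%N -> tau j @: Eblk (n.*2) m i = Eblk (n.*2) m i))
  /\ (forall x, s1 x = x -> x \in Eblk (n.*2) m m).
Proof.
move=> d_ge2 [_ [product [sinf_cycle [s0_even [[s1_fix s1_even] [tau_budget hurwitz]]]]]].
move=> sinf_label last_fixed m_dvd_n d_le_quot G_preserves_F.
have s1_fixes_last x : val x = (n.*2).-1 -> s1 x = x by case/last_fixed.
split; first by apply: (G_preserves_E d_ge2 m_dvd_n d_le_quot G_preserves_F).
split; first by apply: (F_images d_ge2 m_dvd_n d_le_quot G_preserves_F).
split; first by apply: (E_images d_ge2 m_dvd_n d_le_quot G_preserves_F).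
by apply: (s1_fixed_in_Em d_ge2 m_dvd_n d_le_quot G_preserves_F).
Qed.
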